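(* Let $N=\{1,\dots,n\}$ be agents and $M=\{1,\dots,m\}$ chores, where all agents share an identical additive valuation $V$ with $V(\{j\})\le0$ for all $j$ and $V(M)=-1$, and shares $s_i\in(0,1]$ with $\sum_is_i=1$. Let $\langle X_1,\dots,X_n\rangle$ be the output of Algorithm $\mathsf{EgalGreedy}$. Then $V(X_i)\ge 2\,\mathsf{WMMS}_i$ for every $i\in N$.
   Context: Algorithm $\mathsf{EgalGreedy}$: start with $X_i=\emptyset$ for all $i$; order the chores so that $V(\{1\})\le V(\{2\})\le\dots\le V(\{m\})$ (most costly first); for $j=1,\dots,m$ in this order, pick $i^*\in\arg\max_{i\in N}\frac{V(X_i\cup\{j\})}{s_i}$ (ties broken arbitrarily) and set $X_{i^*}\leftarrow X_{i^*}\cup\{j\}$; return $\langle X_1,\dots,X_n\rangle$. The weighted maxmin share is $\mathsf{WMMS}_i:=\max_{\langle Y_1,\dots,Y_n\rangle}\min_{k\in N}V(Y_k)\frac{s_i}{s_k}$, the maximum over all ordered partitions of $M$ into $n$ possibly empty bundles. *)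

From mathcomp Require Import all_boot all_order all_algebra all_fingroup.
Set Implicit Arguments. Unset Strict Implicit. Unset Printing Implicit Defensive.
Import Order.TTheory GRing.Theory Num.Theory.
Local Open Scope ring_scope.

(* Agents are 'I_n, chores are 'I_m.  The common additive valuation is given
   by its values on singletons  v : 'I_m -> R. *)

Definition Val (R : realFieldType) (m : nat) (v : 'I_m -> R) (S : {set 'I_m}) : R :=
  \sum_(j in S) v j.

(* the bundle of agent i under an assignment (ordered partition)
   Y : 'I_m -> 'I_n  of the chores into n possibly empty bundles *)
Definition bundle (m n : nat) (Y : 'I_m -> 'I_n) (i : 'I_n) : {set 'I_m} :=
  [set j | Y j == i].

(* Both max and min are over finite nonempty index sets; the big operators
   are seeded with one of their own terms (min: k = i; max: the partition
   giving all chores to i), so they are the genuine max / min. *)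
Definition wmms_val (R : realFieldType) (m n : nat) (v : 'I_m -> R)
  (s : 'I_n -> R) (i : 'I_n) (Y : 'I_m -> 'I_n) : R :=
  \big[Num.min/ Val v (bundle Y i) * (s i / s i)]_(k : 'I_n)
     (Val v (bundle Y k) * (s i / s k)).

Definition WMMS (R : realFieldType) (m n : nat) (v : 'I_m -> R)
  (s : 'I_n -> R) (i : 'I_n) : R :=
  \big[Num.max/ wmms_val v s i (fun _ => i)]_(Y : {ffun 'I_m -> 'I_n})
     wmms_val v s i Y.

(* Run of EgalGreedy.  sigma is the processing order: step t (t = 0..m-1)
   processes chore sigma t; the order must satisfy
   V({sigma 0}) <= V({sigma 1}) <= ... (most costly first).
   a j is the agent receiving chore j. *)
Definition prefix_bundle (m n : nat) (sigma : {perm 'I_m}) (a : 'I_m -> 'I_n)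
  (i : 'I_n) (t : nat) : {set 'I_m} :=
  [set sigma u | u : 'I_m & (u < t)%N && (a (sigma u) == i)].

Definition greedy_order (R : realFieldType) (m : nat) (v : 'I_m -> R)
  (sigma : {perm 'I_m}) : Prop :=
  forall t u : 'I_m, (t <= u)%N -> v (sigma t) <= v (sigma u).

(* a is an output of EgalGreedy with processing order sigma, for some
   (arbitrary) tie-breaking: at each step the chosen agent maximises
   V(X_i U {j}) / s_i. *)
Definition egal_greedy_run (R : realFieldType) (m n : nat) (v : 'I_m -> R)
  (s : 'I_n -> R) (sigma : {perm 'I_m}) (a : 'I_m -> 'I_n) : Prop :=
  greedy_order v sigma /\
  forall t : 'I_m, forall i : 'I_n,
    Val v (prefix_bundle sigma a i t :|: [set sigma t]) / s i <=
    Val v (prefix_bundle sigma a (a (sigma t)) t :|: [set sigma t])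
      / s (a (sigma t)).

From mathcomp Require Import all_boot all_order all_algebra all_fingroup.
From mathcomp Require Import lra.
Set Implicit Arguments. Unset Strict Implicit. Unset Printing Implicit Defensive.
Import Order.TTheory GRing.Theory Num.Theory.
Local Open Scope ring_scope.

(* Let x be the last chore EgalGreedy gives to agent i, c = V({x}), L the
   chores processed before x and P_k the bundle of agent k at that moment.
   The greedy choice gives (V(P_k) + c) / s_k <= V(X_i) / s_i for every k.
   Suppose a partition Y had V(Y_k) / s_k > V(X_i) / (2 s_i) for every k, and
   call k loaded when V(P_k) < c.  Chores are processed most costly first, so
   any agent receiving x or a chore of L in Y has V(Y_k) <= c, and therefore
   must be loaded.  Summing over loaded agents, sum V(Y_k) <= V(L) <= sum V(P_k),
   whereas each loaded k has 2 s_i V(P_k) < s_i (V(P_k) + c) <= s_k V(X_i)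
   < 2 s_i V(Y_k): a contradiction. *)

Section Valuation.
Variables (R : realFieldType) (m : nat) (v : 'I_m -> R).
Hypothesis v_le0 : forall j, v j <= 0.

Lemma Val_le_subset (S T : {set 'I_m}) : S \subset T -> Val v T <= Val v S.
Proof.
move=> sST; rewrite /Val (big_setID S) /= (setIidPr sST).
have : \sum_(j in T :\: S) v j <= 0 by apply: sumr_le0.
lra.
Qed.

Lemma Val_le0 (S : {set 'I_m}) : Val v S <= 0.
Proof. by have := @Val_le_subset set0 S (sub0set S); rewrite /Val big_set0. Qed.

Lemma Val_le_mem (S : {set 'I_m}) q : q \in S -> Val v S <= v q.
Proof. by rewrite -sub1set => /(@Val_le_subset _ S); rewrite /Val big_set1. Qed.

Lemma Val_setU1 (S : {set 'I_m}) x : x \notin S -> Val v (x |: S) = v x + Val v S.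
Proof. exact: big_setU1. Qed.

End Valuation.

Section Bundles.
Variables (R : realFieldType) (m n : nat) (v : 'I_m -> R) (Y : 'I_m -> 'I_n).

Lemma sum_Val_bundle (p : pred 'I_n) :
  \sum_(k | p k) Val v (bundle Y k) = Val v [set q | p (Y q)].
Proof.
rewrite /Val (partition_big Y p) => [|q]; last by rewrite inE.
apply: eq_bigr => k pk; apply: eq_bigl => q.
by rewrite !inE; case: eqVneq => [->|]; rewrite ?pk ?andbF.
Qed.

Lemma sum_Val_bundleI (S : {set 'I_m}) :
  \sum_k Val v (bundle Y k :&: S) = Val v S.
Proof.
rewrite /Val (partition_big Y predT) //.
by apply: eq_bigr => k _; apply: eq_bigl => q; rewrite !inE andbC.
Qed.

End Bundles.

Section WMMSBound.
Variables (R : realFieldType) (m n : nat) (v : 'I_m -> R) (s : 'I_n -> R).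
Hypothesis s_gt0 : forall k, 0 < s k.

Lemma WMMS_le (i : 'I_n) B :
  (forall Y : 'I_m -> 'I_n, exists k, Val v (bundle Y k) * (s i / s k) <= B) ->
  WMMS v s i <= B.
Proof.
move=> ex_le; have wmms_le Y : wmms_val v s i Y <= B.
  by have [k le_k] := ex_le Y; apply: bigmin_inf le_k.
by apply: bigmax_le => // Y _; apply: wmms_le.
Qed.

Lemma WMMS_le_half (i : 'I_n) D :
  (forall Y : 'I_m -> 'I_n, exists k, 2 * Val v (bundle Y k) * s i <= s k * D) ->
  2 * WMMS v s i <= D.
Proof.
move=> ex_le; suff : WMMS v s i <= D / 2 by lra.
apply: WMMS_le => Y; have [k le_k] := ex_le Y; exists k.
by rewrite mulrA ler_pdivrMr //; lra.
Qed.

End WMMSBound.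

Section HalfBundle.
Variables (R : realFieldType) (m n : nat) (v : 'I_m -> R) (s : 'I_n -> R).
Hypotheses (v_le0 : forall j, v j <= 0) (s_gt0 : forall k, 0 < s k).
(* In the application D = V(X_i), x is the last chore of i, L the chores
   processed before x and P k the bundle of k at that step. *)
Variables (i : 'I_n) (D : R) (L : {set 'I_m}) (x : 'I_m) (P : 'I_n -> {set 'I_m}).
Hypothesis L_le : forall q, q \in L -> v q <= v x.
Hypothesis sum_P : \sum_k Val v (P k) = Val v L.
Hypothesis greedy : forall k, (Val v (P k) + v x) * s i <= s k * D.

Let loaded k := Val v (P k) < v x.

Lemma greedy_loaded k : loaded k -> 2 * s i * Val v (P k) <= s k * D.
Proof.
rewrite /loaded => load_k; apply: le_trans (greedy k); have := s_gt0 i; nra.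
Qed.

Lemma loaded_of_mem (Y : 'I_m -> 'I_n) :
  (forall k, s k * D < 2 * Val v (bundle Y k) * s i) ->
  forall q, q \in x |: L -> loaded (Y q).
Proof.
move=> Y_gt q xLq; rewrite /loaded ltNge; apply/negP => unload_Yq.
have vq : v q <= v x by case/setU1P: xLq => [->|/L_le].
have Yq_le : Val v (bundle Y (Y q)) <= v x.
  by apply: le_trans vq; apply: Val_le_mem; rewrite ?inE.
have := Y_gt (Y q); have := greedy (Y q); have := s_gt0 i; nra.
Qed.

Lemma exists_half_bundle (Y : 'I_m -> 'I_n) :
  exists k, 2 * Val v (bundle Y k) * s i <= s k * D.
Proof.
have [/existsP[k le_k] | /existsPn Y_gt] :=
  boolP [exists k, 2 * Val v (bundle Y k) * s i <= s k * D]; first by exists k.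
have {}Y_gt k : s k * D < 2 * Val v (bundle Y k) * s i by rewrite ltNge Y_gt.
have Y_loaded := loaded_of_mem Y_gt.
pose SY := \sum_(k | loaded k) Val v (bundle Y k).
pose SP := \sum_(k | loaded k) Val v (P k).
have SY_le_L : SY <= Val v L.
  rewrite /SY sum_Val_bundle; apply: Val_le_subset => //.
  by apply/subsetP => q Lq; rewrite inE Y_loaded // setU1r.
have L_le_SP : Val v L <= SP.
  rewrite -sum_P (bigID loaded) /= -/SP.
  have : \sum_(k | ~~ loaded k) Val v (P k) <= 0 by apply: sumr_le0 => k _; apply: Val_le0.
  lra.
have lower : \sum_(k | loaded k) s k * D < 2 * s i * SY.
  rewrite /SY mulr_sumr; apply: ltr_sum => [|k _]; last by have := Y_gt k; lra.
  by apply/hasP; exists (Y x); rewrite ?mem_index_enum ?Y_loaded ?setU11.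
have upper : 2 * s i * SP <= \sum_(k | loaded k) s k * D.
  by rewrite /SP mulr_sumr; apply: ler_sum => k; apply: greedy_loaded.
have := ler_wpM2l (ltW (s_gt0 i)) (le_trans SY_le_L L_le_SP); lra.
Qed.

End HalfBundle.

Section EgalGreedyRun.
Variables (R : realFieldType) (m n : nat) (v : 'I_m -> R) (s : 'I_n -> R).
Variables (sigma : {perm 'I_m}) (a : 'I_m -> 'I_n).

Lemma mem_prefix_bundle k t q :
  (q \in prefix_bundle sigma a k t) = ((sigma^-1)%g q < t)%N && (a q == k).
Proof.
apply/imsetP/andP => [[u]|[lt_q a_q]].
  by rewrite inE => /andP[lt_u a_u] ->; rewrite permK.
by exists ((sigma^-1)%g q); rewrite ?inE ?lt_q /= permKV ?a_q.
Qed.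

Lemma prefix_bundleE k t :
  prefix_bundle sigma a k t = bundle a k :&: [set q | ((sigma^-1)%g q < t)%N].
Proof. by apply/setP => q; rewrite mem_prefix_bundle !inE andbC. Qed.

Lemma notin_prefix_bundle k (t : 'I_m) : sigma t \notin prefix_bundle sigma a k t.
Proof. by rewrite mem_prefix_bundle permK ltnn. Qed.

Lemma bundle_last_step i (t : 'I_m) :
  a (sigma t) = i -> (forall u : 'I_m, a (sigma u) = i -> (u <= t)%N) ->
  bundle a i = sigma t |: prefix_bundle sigma a i t.
Proof.
move=> a_t t_last; apply/setP => q; rewrite !inE mem_prefix_bundle.
case: (eqVneq q (sigma t)) => [->|q_t]; first by rewrite a_t eqxx.
case: eqVneq => [a_q|_]; rewrite ?andbT ?andbF //=.
rewrite ltn_neqAle t_last ?permKV // andbT; apply/esym.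
by apply: contra_neq q_t => /val_inj <-; rewrite permKV.
Qed.

Lemma egal_greedy_step (t : 'I_m) k :
  (forall k, 0 < s k) -> egal_greedy_run v s sigma a ->
  (Val v (prefix_bundle sigma a k t) + v (sigma t)) * s (a (sigma t)) <=
  s k * (Val v (prefix_bundle sigma a (a (sigma t)) t) + v (sigma t)).
Proof.
move=> s_gt0 [_ greedy]; have := greedy t k.
rewrite ![_ :|: [set sigma t]]setUC !Val_setU1 ?notin_prefix_bundle //.
by rewrite ler_pdivrMr // mulrAC ler_pdivlMr // ![v (sigma t) + _]addrC [_ * s k]mulrC.
Qed.

End EgalGreedyRun.

Theorem lemma4 (R : realFieldType) (n m : nat) (v : 'I_m -> R) (s : 'I_n -> R)
  (hv : forall j, v j <= 0)
  (hVM : Val v [set: 'I_m] = -1)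
  (hs : forall i, 0 < s i <= 1)
  (hsum : \sum_(i < n) s i = 1)
  (sigma : {perm 'I_m}) (a : 'I_m -> 'I_n)
  (hrun : egal_greedy_run v s sigma a) :
  forall i : 'I_n, Val v (bundle a i) >= 2 * WMMS v s i.
Proof.
move=> i; have s_gt0 k : 0 < s k by case/andP: (hs k).
apply: WMMS_le_half => //.
have [-> | [q iq]] := set_0Vmem (bundle a i).
  move=> Y; exists i; have := Val_le0 hv (bundle Y i); have := s_gt0 i.
  by rewrite /Val big_set0; nra.
have a_last : a (sigma ((sigma^-1)%g q)) == i by move: iq; rewrite inE permKV.
have [t /eqP a_t t_last] := @arg_maxnP _ _ (fun u => a (sigma u) == i) val a_last.
have bundle_i := bundle_last_step a_t (fun u a_u => t_last u (introT eqP a_u)).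
have := egal_greedy_step t _ s_gt0 hrun; rewrite a_t => greedy.
apply: (exists_half_bundle hv s_gt0 (L := [set q | ((sigma^-1)%g q < t)%N])
          (x := sigma t) (P := fun k => prefix_bundle sigma a k t)).
- move=> p; rewrite inE => /ltnW le_p; have [sorted_v _] := hrun.
  by have := sorted_v _ _ le_p; rewrite permKV.
- by rewrite -(sum_Val_bundleI v a); apply: eq_bigr => k _; rewrite prefix_bundleE.
- by move=> k; rewrite bundle_i Val_setU1 ?notin_prefix_bundle // [v _ + _]addrC.
Qed.
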